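(* Let $A$ be an infinite set, $\mathcal{L}\in V(\Omega(A))$, $I,J$ sets, $f:A^{I}\to A^{J}$ uniformly continuous, $\alpha:I\to\mathcal{L}$, $\beta:J\to\mathcal{L}$ with $\beta=\overline{f}^{\mathcal{L}}(\alpha)$. Then $\iota_{\beta,\alpha}\circ\iota_{\beta}=\iota_{\alpha}\circ f^{\beta,\alpha}$ as maps $\mathbf{F}(A,J)/Z_{\beta}\to\langle\alpha''(I)\rangle$.
   Context: For each $a\in A$ let $\hat{a}$ be a constant symbol, and for each $n\geq1$ and each $h:A^{n}\to A$ let $\hat{h}$ be an $n$-ary operation symbol. $\Omega(A)$ is the algebra with universe $A$ interpreting $\hat{a}$ as $a$ and $\hat{h}$ as $h$; $V(\Omega(A))$ is the variety it generates. For $h:X\to Y$, $\Pi(h)$ is the partition of $X$ into nonempty fibers; for a partition $P$ of $Y$, $[h]_{-1}(P)=\{h^{-1}(R):R\in P\}\setminus\{\emptyset\}$. For $i_{1},\dots,i_{n}\in I$, $\mathcal{P}_{i_{1},\dots,i_{n}}$ is the partition of $A^{I}$ with $u,v$ in the same block iff $u(i_{k})=v(i_{k})$ for all $k$; $\mathcal{P}(A,I)$ is the filter of partitions of $A^{I}$ coarser than some $\mathcal{P}_{i_{1},\dots,i_{n}}$, and $\{\emptyset\}\cup\bigcup\mathcal{P}(A,I)$ (all blocks of such partitions, plus $\emptyset$) is a Boolean algebra of subsets of $A^{I}$. $\mathbf{F}(A,I)=\{h\in A^{A^{I}}:\Pi(h)\in\mathcal{P}(A,I)\}$, a subalgebra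 of $\Omega(A)^{A^{I}}$ freely generated in $V(\Omega(A))$ by the projections $\pi_{i}(u)=u(i)$; each element has the form $\hat{r}^{\mathbf{F}(A,I)}(\pi_{i_{1}},\dots,\pi_{i_{n}})$. A map $h:A^{I}\to A^{J}$ is uniformly continuous if $[h]_{-1}(P)\in\mathcal{P}(A,I)$ for all $P\in\mathcal{P}(A,J)$; then each $\pi_{j}\circ h\in\mathbf{F}(A,I)$. For $h=\hat{r}^{\mathbf{F}(A,I)}(\pi_{i_{1}},\dots,\pi_{i_{n}})$, $\overline{h}^{\mathcal{L}}((\ell_{i})_{i\in I})=\hat{r}^{\mathcal{L}}(\ell_{i_{1}},\dots,\ell_{i_{n}})$ (well defined), and for uniformly continuous $f$, $\overline{f}^{\mathcal{L}}(\alpha)=(\overline{\pi_{j}\circ f}^{\mathcal{L}}(\alpha))_{j\in J}$. For $\alpha:I\to\mathcal{L}$, $\phi_{\alpha}:\mathbf{F}(A,I)\to\mathcal{L}$ is the unique homomorphism with $\phi_{\alpha}(\pi_{i})=\alpha(i)$; $Z_{\alpha}$ is the filter on $\{\emptyset\}\cup\bigcup\mathcal{P}(A,I)$ with $\phi_{\alpha}(\ell)=\phi_{\alpha}(m)$ iff $\{u:\ell(u)=m(u)\}\in Z_{\alpha}$; $\mathbf{F}(A,I)/Z_{\alpha}$ is the corresponding quotient, with $[\ell]$ the class of $\ell$; $\langle\alpha''(I)\rangle$ is the subalgebra of $\mathcal{L}$ generated by the image of $\alpha$; and $\iota_{\alpha}:\mathbf{F}(A,I)/Z_{\alpha}\to\langle\alpha''(I)\rangle$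 is the isomorphism $\iota_{\alpha}([\ell])=\phi_{\alpha}(\ell)$. The same notation applies to $\beta$ and $J$. Under the hypotheses, $\langle\beta''(J)\rangle\subseteq\langle\alpha''(I)\rangle$, and $\iota_{\beta,\alpha}:\langle\beta''(J)\rangle\to\langle\alpha''(I)\rangle$ is the inclusion map. The map $f^{\beta,\alpha}:\mathbf{F}(A,J)/Z_{\beta}\to\mathbf{F}(A,I)/Z_{\alpha}$ is defined by $f^{\beta,\alpha}([\ell])=[\ell\circ f]$ (this is well defined). *)

From mathcomp Require Import all_boot.
From mathcomp Require Import boolp classical_sets cardinality.

Set Implicit Arguments.
Unset Strict Implicit.
Unset Printing Implicit Defensive.
Local Open Scope classical_set_scope.

(* The signature of Omega(A): a constant symbol \hat a for each a : A, *)
(* and an n-ary symbol \hat h for each n >= 1 and h : A^n -> A.        *)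
(* A^n (n >= 1) is rendered as 'I_n.+1 -> A.                           *)
Inductive sym (A : Type) : Type :=
| SConst : A -> sym A
| SFun : forall n : nat, (('I_n.+1 -> A) -> A) -> sym A.

Definition arity (A : Type) (s : sym A) : nat :=
  match s with SConst _ => 0 | @SFun _ n _ => n.+1 end.

Record algebra (A : Type) := Algebra {
  carrier :> Type;
  op : forall s : sym A, ('I_(arity s) -> carrier) -> carrier }.

Definition omega_op (A : Type) (s : sym A) : ('I_(arity s) -> A) -> A :=
  match s return ('I_(arity s) -> A) -> A with
  | SConst a => fun _ => a
  | @SFun _ n h => fun args => h args
  end.

Definition Omega (A : Type) : algebra A := @Algebra A A (@omega_op A).

Inductive term (A X : Type) : Type :=
| TVar : X -> term A X
| TApp : forall s : sym A, ('I_(arity s) -> term A X) -> term A X.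

Fixpoint eval (A X : Type) (L : algebra A) (e : X -> L) (t : term A X) : L :=
  match t with
  | TVar x => e x
  | TApp s args => @op _ L s (fun k => eval e (args k))
  end.

(* L \in V(Omega(A)): L satisfies every identity true in Omega(A)
   (Birkhoff: the variety generated by Omega(A) = Mod(Id(Omega(A)))). *)
Definition in_variety (A : Type) (L : algebra A) : Prop :=
  forall t1 t2 : term A nat,
    (forall e : nat -> Omega A, eval e t1 = eval e t2) ->
    forall e : nat -> L, eval e t1 = eval e t2.

Definition partition (X : Type) (P : set (set X)) : Prop :=
  (forall R, P R -> R !=set0) /\
  (forall x, exists R, P R /\ R x) /\
  (forall R S, P R -> P S -> (exists x, R x /\ S x) -> R = S).

Definition coarser (X : Type) (P Q : set (set X)) : Prop :=
  forall R, Q R -> exists S, P S /\ R `<=` S.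

Definition Pi (X Y : Type) (h : X -> Y) : set (set X) :=
  [set R | exists x, R = h @^-1` [set h x]].

Definition preimg_part (X Y : Type) (h : X -> Y) (P : set (set Y)) : set (set X) :=
  [set S | (exists R, P R /\ S = h @^-1` R) /\ S <> set0].

Definition Pidx (A I : Type) (n : nat) (idx : 'I_n -> I) : set (set (I -> A)) :=
  [set R | exists u : I -> A, R = [set v | forall k, v (idx k) = u (idx k)]].

Definition PAI (A I : Type) : set (set (set (I -> A))) :=
  [set P | partition P /\ exists n (idx : 'I_n -> I), coarser P (@Pidx A I n idx)].

Definition BAI (A I : Type) : set (set (I -> A)) :=
  [set R | R = set0 \/ exists P, @PAI A I P /\ P R].

Definition inF (A I : Type) (h : (I -> A) -> A) : Prop := @PAI A I (Pi h).
Definition FA (A I : Type) := {h : (I -> A) -> A | inF h}.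

Definition unif_cont (A I J : Type) (h : (I -> A) -> (J -> A)) : Prop :=
  forall P, @PAI A J P -> @PAI A I (preimg_part h P).

(* \overline{h}^L(alpha) for h = \hat r^F(pi_{i_1},...,pi_{i_n}):       *)
(* y is the value \hat r^L(alpha_{i_1},...,alpha_{i_n}) (well defined). *)
Definition barval (A I : Type) (L : algebra A) (h : (I -> A) -> A)
    (alpha : I -> L) (y : L) : Prop :=
  exists (s : sym A) (idx : 'I_(arity s) -> I),
    (forall u, h u = @omega_op A s (fun k => u (idx k))) /\
    y = @op _ L s (fun k => alpha (idx k)).

Definition bar_ext (A I J : Type) (L : algebra A) (f : (I -> A) -> (J -> A))
    (alpha : I -> L) (beta : J -> L) : Prop :=
  forall j, barval (fun u => f u j) alpha (beta j).

(* phi_alpha : the homomorphism F(A,I) -> L with pi_i |-> alpha i.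
   (F(A,I) is a subalgebra of Omega(A)^{A^I}; operations pointwise.) *)
Definition is_phi (A I : Type) (L : algebra A) (alpha : I -> L)
    (phi : FA A I -> L) : Prop :=
  (forall (s : sym A) (args : 'I_(arity s) -> FA A I) (h : FA A I),
     (forall u, sval h u = @omega_op A s (fun k => sval (args k) u)) ->
     phi h = @op _ L s (fun k => phi (args k))) /\
  (forall (i : I) (h : FA A I), (forall u, sval h u = u i) -> phi h = alpha i).

(* Filters on the Boolean algebra BAI (possibly improper). *)
Definition filterB (A I : Type) (Z : set (set (I -> A))) : Prop :=
  Z `<=` @BAI A I /\ Z setT /\
  (forall R S, Z R -> @BAI A I S -> R `<=` S -> Z S) /\
  (forall R S, Z R -> Z S -> Z (R `&` S)).

Definition is_Z (A I : Type) (L : algebra A) (phi : FA A I -> L)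
    (Z : set (set (I -> A))) : Prop :=
  filterB Z /\
  forall l m : FA A I, phi l = phi m <-> Z [set u | sval l u = sval m u].

Definition zrel (A I : Type) (Z : set (set (I -> A))) (l m : FA A I) : Prop :=
  Z [set u | sval l u = sval m u].

Definition quot (T : Type) (R : T -> T -> Prop) :=
  {C : set T | exists x, C = [set y | R x y]}.

Definition qclass (T : Type) (R : T -> T -> Prop) (x : T) : quot R :=
  exist (fun C => exists x, C = [set y | R x y]) [set y | R x y]
        (ex_intro _ x erefl).

Inductive gen (A I : Type) (L : algebra A) (alpha : I -> L) : L -> Prop :=
| gen_base : forall i, gen alpha (alpha i)
| gen_op : forall (s : sym A) (args : 'I_(arity s) -> L),
    (forall k, gen alpha (args k)) -> gen alpha (@op _ L s args).

Definition subalg (A I : Type) (L : algebra A) (alpha : I -> L) :=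
  {x : L | gen alpha x}.

From mathcomp Require Import all_boot.
From mathcomp Require Import boolp classical_sets cardinality.
Set Implicit Arguments.
Unset Strict Implicit.
Unset Printing Implicit Defensive.
Local Open Scope classical_set_scope.

(* Both sides send [l] to phi_beta(l).  Writing l = \hat r(pi_{j_1},...,pi_{j_n}),
   the element l o f of F(A,I) is \hat r(pi_{j_1} o f, ..., pi_{j_n} o f), and
   phi_alpha(pi_j o f) = \overline{pi_j o f}(alpha) = beta_j by the choice of beta;
   hence phi_alpha(l o f) = \hat r(beta_{j_1},...,beta_{j_n}) = phi_beta(l).
   Uniform continuity of f is only needed to know that l o f lies in F(A,I),
   and infinity of A only to have an element of A. *)

Lemma sval_inj (T : Type) (P : T -> Prop) : injective (@sval T P).
Proof. by move=> [x px] [y py] /= xy; apply: eq_exist. Qed.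

Lemma qclass_surj (T : Type) (R : T -> T -> Prop) (q : quot R) :
  exists x, q = qclass R x.
Proof. by case: q => C [x eC]; exists x; apply: sval_inj. Qed.

Section FiniteSupport.

Variables (A I : Type).

Definition determined_by n (idx : 'I_n -> I) (h : (I -> A) -> A) :=
  forall u v, (forall k, u (idx k) = v (idx k)) -> h u = h v.

Lemma determined_inF n (idx : 'I_n -> I) (h : (I -> A) -> A) :
  determined_by idx h -> inF h.
Proof.
move=> hdet; split.
  split; first by move=> R [x ->]; exists x.
  split; first by move=> x; exists (h @^-1` [set h x]); split=> //; exists x.
  by move=> R S [x ->] [y ->] [z [/= <- ->]].
exists n, idx => R [u ->]; exists (h @^-1` [set h u]); split; first by exists u.
by move=> v /= vu; apply: hdet => k; rewrite vu.
Qed.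

Lemma inF_determined (h : FA A I) :
  exists n (idx : 'I_n -> I), determined_by idx (sval h).
Proof.
case: h => h [_ [n [idx coarse]]] /=; exists n, idx => u v uv.
have [S [[x ->] blockS]] := coarse _ (ex_intro _ u erefl).
have Su := blockS u (fun k => erefl).
have Sv : [set w | forall k, w (idx k) = u (idx k)] v by move=> k; rewrite uv.
by move: (blockS v Sv) Su => /= -> ->.
Qed.

(* Coordinates outside the image of idx are filled with the dummy value a. *)
Lemma determined_omega_op (a : A) n (idx : 'I_n -> I) (h : (I -> A) -> A) :
  determined_by idx h ->
  exists (s : sym A) (idx' : 'I_(arity s) -> I),
    forall u, h u = @omega_op A s (fun k => u (idx' k)).
Proof.
case: n idx => [|n] idx hdet.
  by exists (SConst (h (fun=> a))), idx => u; apply: hdet => -[].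
pose ext (w : 'I_n.+1 -> A) (j : I) : A :=
  if pselect (exists k, idx k = j) is left e then w (projT1 (cid e)) else a.
exists (SFun (fun w => h (ext w))), idx => u /=.
apply: hdet => k; rewrite /ext; case: pselect => [e|]; last by case; exists k.
by case: (cid e) => k' /= ->.
Qed.

Definition proj_FA (i : I) : FA A I :=
  exist _ (fun u => u i) (@determined_inF 1 (fun=> i) _ (fun u v uv => uv ord0)).

Lemma is_phi_omega_op (L : algebra A) (alpha : I -> L) (phi : FA A I -> L)
    (s : sym A) (idx : 'I_(arity s) -> I) (h : FA A I) :
  is_phi alpha phi ->
  (forall u, sval h u = @omega_op A s (fun k => u (idx k))) ->
  phi h = @op _ L s (fun k => alpha (idx k)).
Proof.
move=> [phi_op phi_proj] hE.
rewrite (phi_op s (fun k => proj_FA (idx k))) //.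
by congr op; apply: funext => k; apply: phi_proj.
Qed.

End FiniteSupport.

Lemma inF_comp_unif_cont (A I J : Type) (f : (I -> A) -> (J -> A)) (l : FA A J) :
  unif_cont f -> inF (sval l \o f).
Proof.
move=> f_uc; rewrite /inF.
suff -> : Pi (sval l \o f) = preimg_part f (Pi (sval l)) by exact: f_uc (proj2_sig l).
apply: funext => S; apply: propext; split.
  move=> [x ->]; split.
    by exists (sval l @^-1` [set sval l (f x)]); split=> //; exists (f x).
  by apply/eqP/set0P; exists x.
move=> [[R [[x ->] ->]] /eqP/set0P [u /= lfu]].
by exists u; rewrite /= lfu.
Qed.

Lemma is_phi_comp_bar_ext (A I J : Type) (L : algebra A) (a : A)
    (f : (I -> A) -> (J -> A)) (alpha : I -> L) (beta : J -> L)
    (phi_a : FA A I -> L) (phi_b : FA A J -> L) (l : FA A J) (m : FA A I) :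
  bar_ext f alpha beta -> is_phi alpha phi_a -> is_phi beta phi_b ->
  (forall u, sval m u = sval l (f u)) -> phi_a m = phi_b l.
Proof.
move=> beta_def phi_a_def phi_b_def mE.
have [n [idx ldet]] := inF_determined l.
have [s [idx' lE]] := determined_omega_op a ldet.
have fjP j : inF (fun u => f u j).
  have [sj [ij [fjE _]]] := beta_def j.
  apply: (determined_inF (idx := ij)) => u v uv; rewrite !fjE.
  by congr (@omega_op A sj); apply: funext => k.
have phi_fj j : phi_a (exist _ _ (fjP j)) = beta j.
  have [sj [ij [fjE ->]]] := beta_def j.
  by apply: is_phi_omega_op phi_a_def _ => u; rewrite /= fjE.
rewrite (is_phi_omega_op phi_b_def lE).
rewrite ((proj1 phi_a_def) s (fun k => exist _ _ (fjP (idx' k)))); last first.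
  by move=> u; rewrite mE lE.
by congr op; apply: funext => k; rewrite phi_fj.
Qed.

Theorem mainTheorem8
  (A : Type) (A_infinite : infinite_set [set: A])
  (L : algebra A) (L_in_V : in_variety L)
  (I J : Type) (f : (I -> A) -> (J -> A)) (f_uc : unif_cont f)
  (alpha : I -> L) (beta : J -> L) (beta_def : bar_ext f alpha beta)
  (* phi_alpha, phi_beta *)
  (phi_a : FA A I -> L) (phi_a_def : is_phi alpha phi_a)
  (phi_b : FA A J -> L) (phi_b_def : is_phi beta phi_b)
  (* Z_alpha, Z_beta *)
  (Z_a : set (set (I -> A))) (Z_a_def : is_Z phi_a Z_a)
  (Z_b : set (set (J -> A))) (Z_b_def : is_Z phi_b Z_b)
  (* iota_alpha, iota_beta *)
  (iota_a : quot (zrel Z_a) -> subalg alpha)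
  (iota_a_def : forall l : FA A I, sval (iota_a (qclass (zrel Z_a) l)) = phi_a l)
  (iota_b : quot (zrel Z_b) -> subalg beta)
  (iota_b_def : forall l : FA A J, sval (iota_b (qclass (zrel Z_b) l)) = phi_b l)
  (* iota_{beta,alpha}: the inclusion <beta''(J)> -> <alpha''(I)> *)
  (iota_ba : subalg beta -> subalg alpha)
  (iota_ba_def : forall x, sval (iota_ba x) = sval x)
  (* f^{beta,alpha}([l]) = [l o f] *)
  (f_ba : quot (zrel Z_b) -> quot (zrel Z_a))
  (f_ba_def : forall (l : FA A J) (m : FA A I),
      (forall u, sval m u = sval l (f u)) ->
      f_ba (qclass (zrel Z_b) l) = qclass (zrel Z_a) m) :
  iota_ba \o iota_b = iota_a \o f_ba.
Proof.
have [a _] := infinite_setN0 A_infinite.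
apply: funext => q; have [l ->] := qclass_surj q.
pose m : FA A I := exist _ _ (inF_comp_unif_cont l f_uc).
apply: sval_inj => /=.
rewrite iota_ba_def iota_b_def (f_ba_def l m (fun=> erefl)) iota_a_def.
by apply/esym/(is_phi_comp_bar_ext a beta_def).
Qed.
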